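(* Let $G$ be a graph, let $L$ be a set of specified leaks on $V(G)$, and let $\ell=I(L)$. Then every specified $\ell$-leaky forcing set of $G$ is an $L$-leaky forcing set of $G$. Consequently $\operatorname{Z}_{(L)}(G)\le \operatorname{Z}^s_{(\ell)}(G)$.
   Context: All graphs are finite, simple and undirected. Zero forcing: a blue vertex $u$ with exactly one white neighbor $w$ may force $w$ (color it blue), written $u\to w$. A specified leak on $V(G)$ is an ordered pair $x\to y$ of vertices, meaning $x$ (the tail) is prohibited from forcing $y$ (the head); a set of specified leaks is thus the arc set of a directed graph on $V(G)$. For a set $L$ of specified leaks, $T(L)$ and $H(L)$ denote its sets of tails and heads. $B$ is a specified $\ell$-leaky forcing set if for every set of at most $\ell$ specified leaks, exhaustively applying the forcing rule from initial blue set $B$ without performing prohibited forces colors all of $V(G)$ blue; $\operatorname{Z}^s_{(\ell)}(G)$ is the minimum size of such a set. Two sets $L_1,L_2$ of specified leaks on $V(G)$ are isomorphic if there is a bijection $\phi:V(G)\to V(G)$ with $x\to y\in L_1$ iff $\phi(x)\to\phi(y)\in L_2$. $B$ is an $L$-leaky forcing set if $B$ colors all of $G$ blue (never performing prohibited forces) despite any set $L_1$ of specified leaks isomorphic to some subset $L_2\subseteq L$; $\operatorname{Z}_{(L)}(G)$ is the minimum size of such a set. A set $L$ of specified leaks is independent if $|T(L)|=|L|$ and $T(L)\cap H(L)=\varnothing$. $I(L)$ is the maximum size of an independent subset of $L$. *)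

From mathcomp Require Import all_boot.
From Stdlib Require Import ClassicalDescription.
Set Implicit Arguments. Unset Strict Implicit. Unset Printing Implicit Defensive.

Definition propb (P : Prop) : bool :=
  if excluded_middle_informative P then true else false.

Section LeakyForcing.
Variables (T : finType) (e : rel T).

(* A set of specified leaks is a set of ordered pairs (x, y) = "x -> y":
   x (tail) is prohibited from forcing y (head). *)

Definition force_step (L : {set T * T}) (S S' : {set T}) : bool :=
  [exists u, exists w,
    [&& u \in S, w \notin S, e u w,
        [forall v, e u v ==> (v \in S) || (v == w)],
        (u, w) \notin L & S' == w |: S]].

Definition stalled (L : {set T * T}) (S : {set T}) : bool :=
  [forall S', ~~ force_step L S S'].

(* B colors all of G despite the leaks L: exhaustively applying allowed
   forces (in any order) from B ends with every vertex blue. *)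
Definition forces_despite (L : {set T * T}) (B : {set T}) : Prop :=
  forall S, connect (force_step L) B S -> stalled L S -> S = [set: T].

Definition spec_leaky_forcing (l : nat) (B : {set T}) : Prop :=
  forall L : {set T * T}, #|L| <= l -> forces_despite L B.

Definition leak_iso (L1 L2 : {set T * T}) : Prop :=
  exists phi : T -> T, bijective phi /\
    forall x y, ((x, y) \in L1) = ((phi x, phi y) \in L2).

Definition L_leaky_forcing (L : {set T * T}) (B : {set T}) : Prop :=
  forall L1 L2 : {set T * T}, L2 \subset L -> leak_iso L1 L2 ->
    forces_despite L1 B.

Definition tails (L : {set T * T}) : {set T} := [set p.1 | p in L].
Definition heads (L : {set T * T}) : {set T} := [set p.2 | p in L].

Definition independent_leaks (L : {set T * T}) : bool :=
  (#|tails L| == #|L|) && [disjoint tails L & heads L].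

Definition I_leaks (L : {set T * T}) : nat :=
  \max_(L' in powerset L | independent_leaks L') #|L'|.

(* Minimum sizes; the default #|T| is attained by [set: T], which is
   always a forcing set of both kinds, so these are true minima. *)
Definition Zs (l : nat) : nat :=
  \big[minn/#|T|]_(B : {set T} | propb (spec_leaky_forcing l B)) #|B|.

Definition ZL (L : {set T * T}) : nat :=
  \big[minn/#|T|]_(B : {set T} | propb (L_leaky_forcing L B)) #|B|.
End LeakyForcing.

From mathcomp Require Import all_boot all_order.
From Stdlib Require Import ClassicalDescription.
Set Implicit Arguments. Unset Strict Implicit. Unset Printing Implicit Defensive.

(* Fix a stalled blue set S reached from B.  The only leaks that matter at S
   are the "active" ones: pairs (u, w) where the blue vertex u has w as its
   unique white neighbour.  Active leaks have distinct tails (u determines w)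
   and their tails are blue while their heads are white, so they form an
   independent set.  Replacing a leak set by its active part keeps every
   forcing chain and keeps S stalled; hence withstanding all independent
   subsets of a leak set suffices to withstand the whole set
   (forces_despite_independent).  An independent subset of a leak set
   isomorphic to a subset of L is carried by the isomorphism onto an
   independent subset of L of the same size, so it has at most I(L) leaks.
   The inequality on the minimum sizes follows by monotonicity of a minimum
   over a smaller family of candidate sets. *)

Section LeakyForcing.
Variables (T : finType) (e : rel T).
Implicit Types (L : {set T * T}) (B S : {set T}).

Definition available_force S (p : T * T) : bool :=
  [&& p.1 \in S, p.2 \notin S, e p.1 p.2 &
      [forall v, e p.1 v ==> (v \in S) || (v == p.2)]].

Lemma force_stepP L S (S' : {set T}) :
  reflect (exists2 p, available_force S p & (p \notin L) && (S' == p.2 |: S))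
          (force_step e L S S').
Proof.
apply: (iffP existsP) => [[u /existsP[w /and5P[uS wS euw uw /andP[wL S'E]]]]|].
  by exists (u, w); rewrite /available_force /= ?uS ?wS ?euw ?uw ?wL.
move=> [[u w] /and4P[uS wS euw uw] /andP[wL S'E]]; exists u; apply/existsP.
by exists w; rewrite uS wS euw uw wL S'E.
Qed.

Lemma force_step_subset (L0 L : {set T * T}) S (S' : {set T}) :
  L0 \subset L -> force_step e L S S' -> force_step e L0 S S'.
Proof.
move=> subL0 /force_stepP[p avail /andP[pL S'E]]; apply/force_stepP.
by exists p; rewrite // S'E andbT; apply: contra pL; apply: (subsetP subL0).
Qed.

Lemma connect_force_subset (L0 L : {set T * T}) B S :
  L0 \subset L -> connect (force_step e L) B S -> connect (force_step e L0) B S.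
Proof.
move=> subL0; apply: connect_sub => S1 S2 step.
by apply: connect1; apply: force_step_subset step.
Qed.

Definition active_leaks L S : {set T * T} := [set p in L | available_force S p].

Lemma active_leaks_subset L S : active_leaks L S \subset L.
Proof. by apply/subsetP => p; rewrite inE => /andP[]. Qed.

Lemma stalled_active L S : stalled e L S -> stalled e (active_leaks L S) S.
Proof.
move=> /forallP stalledL; apply/forallP => S'; apply/negP.
move=> /force_stepP[p avail /andP[pA S'E]]; move/negP: (stalledL S'); apply.
apply/force_stepP; exists p; rewrite // S'E andbT.
by apply: contra pA => pL; rewrite inE pL avail.
Qed.

Lemma available_force_tail S p q :
  available_force S p -> available_force S q -> p.1 = q.1 -> p = q.
Proof.
case: p q => [u w] [u' w'] /and4P[_ _ _ /forallP uniq_w] /and4P[_ w'S euw' _] /= uu'.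
move: (uniq_w w'); rewrite -uu' in euw' *; rewrite euw' (negbTE w'S) /=.
by move=> /eqP ->.
Qed.

Lemma active_leaks_independent L S : independent_leaks (active_leaks L S).
Proof.
apply/andP; split.
  apply/eqP; apply: card_in_imset => p q; rewrite !inE => /andP[_ ap] /andP[_ aq].
  exact: available_force_tail ap aq.
rewrite -setI_eq0; apply/eqP/setP => x; rewrite !inE; apply/negbTE/negP.
move=> /andP[/imsetP[p + ->] /imsetP[q + xq]].
rewrite !inE => /andP[_ /and4P[pS _ _ _]] /andP[_ /and4P[_ qS _ _]].
by rewrite xq (negbTE qS) in pS.
Qed.

Lemma forces_despite_independent L B :
  (forall L0, L0 \subset L -> independent_leaks L0 -> forces_despite e L0 B) ->
  forces_despite e L B.
Proof.
move=> indep S reach stall.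
apply: (indep _ (active_leaks_subset L S) (active_leaks_independent L S)).
  exact: connect_force_subset (active_leaks_subset L S) reach.
exact: stalled_active.
Qed.

Definition leak_image (phi : T -> T) L : {set T * T} :=
  [set (phi p.1, phi p.2) | p in L].

Section InjectiveImage.
Variables (phi : T -> T) (phi_inj : injective phi).

Lemma leak_image_inj : injective (fun p : T * T => (phi p.1, phi p.2)).
Proof. by move=> [a b] [c d] [/phi_inj -> /phi_inj ->]. Qed.

Lemma card_leak_image L : #|leak_image phi L| = #|L|.
Proof. exact: card_imset leak_image_inj. Qed.

Lemma tails_leak_image L : tails (leak_image phi L) = phi @: tails L.
Proof. by rewrite /tails -!imset_comp. Qed.

Lemma heads_leak_image L : heads (leak_image phi L) = phi @: heads L.
Proof. by rewrite /heads -!imset_comp. Qed.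

Lemma independent_leak_image L :
  independent_leaks L -> independent_leaks (leak_image phi L).
Proof.
rewrite /independent_leaks tails_leak_image heads_leak_image card_leak_image.
by rewrite (card_imset _ phi_inj) imset_disjoint.
Qed.
End InjectiveImage.

Lemma leq_I_leaks (L0 L : {set T * T}) :
  L0 \subset L -> independent_leaks L0 -> #|L0| <= I_leaks L.
Proof.
move=> subL0 indep; rewrite /I_leaks.
apply: (@leq_bigmax_cond _ (fun A => (A \in powerset L) && independent_leaks A)).
by rewrite powersetE subL0.
Qed.

Lemma iso_independent_bound (L L1 L2 L0 : {set T * T}) :
  L2 \subset L -> leak_iso L1 L2 -> L0 \subset L1 -> independent_leaks L0 ->
  #|L0| <= I_leaks L.
Proof.
move=> subL2 [phi [/bij_inj phi_inj iso]] subL0 indep.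
rewrite -(card_leak_image phi_inj); apply: leq_I_leaks.
  apply/subsetP => _ /imsetP[p pL0 ->]; apply: (subsetP subL2).
  by rewrite -iso -surjective_pairing (subsetP subL0).
exact: (independent_leak_image phi_inj indep).
Qed.

Lemma spec_leaky_is_L_leaky L B :
  spec_leaky_forcing e (I_leaks L) B -> L_leaky_forcing e L B.
Proof.
move=> specB L1 L2 subL2 iso; apply: forces_despite_independent => L0 subL0 indep.
exact: specB (iso_independent_bound subL2 iso subL0 indep).
Qed.

End LeakyForcing.

Lemma bigmin_sub (I : finType) (P P' : pred I) (F : I -> nat) (m : nat) :
  (forall i, P' i -> P i) ->
  \big[minn/m]_(i | P i) F i <= \big[minn/m]_(i | P' i) F i.
Proof. exact: (@Order.TotalTheory.sub_bigmin _ nat). Qed.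

Lemma propb_impl (P Q : Prop) : (P -> Q) -> propb P -> propb Q.
Proof.
move=> PQ; rewrite /propb.
case: (excluded_middle_informative P) => // /PQ Qh _.
by case: excluded_middle_informative.
Qed.

Theorem theorem5p1 (T : finType) (e : rel T)
  (e_sym : symmetric e) (e_irr : irreflexive e)
  (L : {set T * T}) (l : nat) (hl : l = I_leaks L) :
  (forall B : {set T}, spec_leaky_forcing e l B -> L_leaky_forcing e L B) /\
  ZL e L <= Zs e l.
Proof.
subst l; split; first exact: spec_leaky_is_L_leaky.
by apply: bigmin_sub => B; apply: propb_impl; apply: spec_leaky_is_L_leaky.
Qed.
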